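(* Let $T,S$ be bounded linear operators on a Banach space with $ST=\nu\,\mathrm{id}$ for some $\nu\in\mathbb C\setminus\{0\}$. Then for all $h\in\mathbb N$, \[(T+S)^h=\sum_{k=0}^{\lfloor h/2\rfloor}\alpha_{h,k}\,\nu^k\sum_{l=0}^{h-2k}T^lS^{\,h-2k-l},\qquad\alpha_{h,k}:=\binom hk-\binom h{k-1},\] with the convention $\binom h{-1}=0$ and $\alpha_{0,0}=1$.
   Context: $\mathbb N=\{0,1,2,\dots\}$; $T^0=S^0=\mathrm{id}$. *)

From HB Require Import structures.
From mathcomp Require Import all_boot all_order all_algebra.
From mathcomp Require Import complex.
From mathcomp Require Import all_classical all_reals all_analysis.
Set Implicit Arguments. Unset Strict Implicit. Unset Printing Implicit Defensive.
Import Order.TTheory GRing.Theory Num.Theory.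
Local Open Scope ring_scope.

Definition opow (V : Type) (n : nat) (f : V -> V) : V -> V := iter n f.

Definition alpha (K : pzRingType) (h k : nat) : K :=
  ('C(h, k))%:R - (if k is k'.+1 then ('C(h, k'))%:R else 0).

(** With [P_m := sum_(l <= m) T^l S^(m-l)], splitting off the extreme terms and
    using [S T = nu] gives the three-term recursion
    [(T + S) P_m = P_(m+1) + nu P_(m-1)] (with [P_(-1) = 0]), exactly that of
    the Chebyshev polynomials of the second kind. Expanding [(T + S)^h] in the
    [P_m] therefore produces coefficients obeying Pascal's rule, with the
    boundary condition that the coefficient of [P_(-1)] vanishes; the ballot
    numbers [alpha h k = C(h, k) - C(h, k - 1)] are the solution, since
    [alpha h k = 0] when [2 k = h + 1]. *)
From HB Require Import structures.
From mathcomp Require Import all_boot all_order all_algebra.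
From mathcomp Require Import complex.
From mathcomp Require Import all_classical all_reals all_analysis.
From mathcomp Require Import zify.
Import Order.TTheory GRing.Theory Num.Theory.
Local Open Scope ring_scope.

Lemma alpha0 (K : pzRingType) (h : nat) : alpha K h 0 = 1.
Proof. by rewrite /alpha bin0 subr0. Qed.

Lemma alphaS (K : pzRingType) (h k : nat) :
  alpha K h.+1 k.+1 = alpha K h k.+1 + alpha K h k.
Proof.
rewrite /alpha; case: k => [|k]; first by rewrite !binS !bin0 natrD addrK subr0 subrK.
rewrite binS [in X in _ - X]binS !natrD.
by rewrite opprD addrACA.
Qed.

Lemma alpha_eq0 (K : pzRingType) (h k : nat) : (2 * k = h.+1)%N -> alpha K h k = 0.
Proof.
case: k => [|k] hk //; rewrite /alpha -(@bin_sub h k.+1); last by lia.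
by rewrite (_ : h - k.+1 = k)%N ?subrr //; lia.
Qed.

Section OrderedExpansion.

Context {K : comPzRingType} {V : lmodType K} {T S : {linear V -> V}} {nu : K}.
Hypothesis ST_scale : forall y, S (T y) = nu *: y.
Variable x : V.

(* [mixed_sum m.+1] is the inner sum of the statement for exponent [m]; the
   shift gives [mixed_sum 0 = 0], which plays the role of [P_(-1)]. *)
Definition mixed_sum (m : nat) : V :=
  \sum_(0 <= l < m) opow l T (opow (m.-1 - l) S x).

Lemma mixed_sum0 : mixed_sum 0 = 0.
Proof. by rewrite /mixed_sum big_geq. Qed.

Lemma mixed_sum1 : mixed_sum 1 = x.
Proof. by rewrite /mixed_sum big_nat1. Qed.

Lemma mixed_sumS (m : nat) : mixed_sum m.+1 = opow m S x + T (mixed_sum m).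
Proof.
rewrite /mixed_sum big_nat_recl //= subn0 linear_sum; congr (_ + _).
by apply: eq_bigr => l _; rewrite /= subnS predn_sub.
Qed.

Lemma S_mixed_sumS (m : nat) : S (mixed_sum m.+1) = opow m.+1 S x + nu *: mixed_sum m.
Proof.
rewrite /mixed_sum big_nat_recl //= subn0 raddfD raddf_sum scaler_sumr.
by congr (_ + _); apply: eq_bigr => l _; rewrite subnS predn_sub; apply: ST_scale.
Qed.

Lemma mixed_sum_recursion (m : nat) :
  T (mixed_sum m.+1) + S (mixed_sum m.+1) = mixed_sum m.+2 + nu *: mixed_sum m.
Proof. by rewrite S_mixed_sumS (mixed_sumS m.+1) addrCA addrA. Qed.

Definition expansion_term (h k : nat) : V :=
  (alpha K h k * nu ^+ k) *: mixed_sum (h.+1 - 2 * k).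

Lemma expansion_term_eq0 (h k : nat) : (h < 2 * k)%N -> expansion_term h k = 0.
Proof.
by move=> hk; rewrite /expansion_term (_ : h.+1 - 2 * k = 0)%N ?mixed_sum0 ?scaler0 //; lia.
Qed.

Lemma TS_expansion_term (h k : nat) :
  T (expansion_term h k) + S (expansion_term h k) =
  (alpha K h k * nu ^+ k) *: mixed_sum (h.+2 - 2 * k) +
  (alpha K h k * nu ^+ k.+1) *: mixed_sum (h - 2 * k).
Proof.
rewrite /expansion_term !linearZ -scalerDr.
have [hk|hk] := leqP (2 * k) h.
  rewrite (subSn hk) mixed_sum_recursion -!subSn ?(leqW hk) //.
  by rewrite scalerDr scalerA -mulrA -exprSr.
have [k_half|k_big] := eqVneq (2 * k)%N h.+1.
  by rewrite alpha_eq0 // !mul0r !scale0r addr0.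
have [-> -> ->] : [/\ h.+1 - 2 * k = 0, h.+2 - 2 * k = 0 & h - 2 * k = 0]%N by split; lia.
by rewrite mixed_sum0 !raddf0 !addr0 scaler0.
Qed.

Lemma expansion_termSS (h k : nat) :
  expansion_term h.+1 k.+1 =
  (alpha K h k.+1 * nu ^+ k.+1) *: mixed_sum (h - 2 * k) +
  (alpha K h k * nu ^+ k.+1) *: mixed_sum (h - 2 * k).
Proof.
rewrite /expansion_term alphaS mulrDl scalerDl.
by rewrite (_ : h.+2 - 2 * k.+1 = h - 2 * k)%N //; lia.
Qed.

Lemma opow_add_expansion (h : nat) :
  opow h (fun y => T y + S y) x = \sum_(0 <= k < h.+1) expansion_term h k.
Proof.
elim: h => [|h IH].
  by rewrite big_nat1 /expansion_term alpha0 mulr1 scale1r mixed_sum1.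
rewrite /opow iterS -/(opow h _ x) IH !linear_sum -big_split /=.
rewrite (eq_bigr _ (fun k _ => TS_expansion_term h k)) big_split /=.
rewrite [RHS]big_nat_recl // (eq_bigr _ (fun k _ => expansion_termSS h k)).
rewrite big_split /= addrA; congr (_ + _).
rewrite big_nat_recl // [in RHS]big_nat_recr //= (_ : h - 2 * h = 0)%N; last by lia.
rewrite mixed_sum0 scaler0 addr0; congr (_ + _).
  by rewrite /expansion_term !alpha0.
by apply: eq_bigr => k _; rewrite (_ : h.+2 - 2 * k.+1 = h - 2 * k)%N //; lia.
Qed.

Lemma expansion_sum_half (h : nat) :
  \sum_(0 <= k < h.+1) expansion_term h k = \sum_(0 <= k < h./2.+1) expansion_term h k.
Proof.
rewrite (@big_cat_nat _ _ _ h./2.+1) //=; last by rewrite ltnS -divn2 leq_div.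
rewrite [X in _ + X]big1_seq ?addr0 // => k /andP[_].
by rewrite mem_index_iota -divn2 => k_gt; apply: expansion_term_eq0; lia.
Qed.

End OrderedExpansion.

Theorem lemma3p1 (R : realType) (V : completeNormedModType R[i])
  (T S : {linear V -> V}) (hT : continuous T) (hS : continuous S)
  (nu : R[i]) (hnu : nu != 0) (hST : forall x : V, S (T x) = nu *: x)
  (h : nat) (x : V) :
  opow h (fun y => T y + S y) x =
  \sum_(0 <= k < h./2.+1)
     (alpha _ h k * nu ^+ k) *:
       \sum_(0 <= l < (h - 2 * k).+1) opow l T (opow (h - 2 * k - l) S x).
Proof.
rewrite (opow_add_expansion hST) expansion_sum_half !big_nat.
apply: eq_bigr => k /andP[_ k_le].
have k_half : (2 * k <= h)%N by rewrite -divn2 in k_le; lia.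
by rewrite /expansion_term subSn.
Qed.
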